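(* Consider a chemical reaction network satisfying hypotheses (H1) and (H2) below, and let \[ Y+S_0\rightleftarrows U_1 \rightarrow Y+S_1\rightleftarrows U_2 \rightarrow \cdots \rightarrow Y+S_{L-1}\rightleftarrows U_L \rightarrow Y+S_L \] be one of its connected components ($L\ge 1$), with rate constants $a_j,b_j,c_j$ ($1\le j\le L$) as described in the context. Then all the constants $a_1,\dots,a_L,b_1,\dots,b_L,c_1,\dots,c_L$ of this component are identifiable from the single variable $s_L$ using the total derivatives $s_L^{(\ell)}$ with $1\le \ell\le \max\{2,2L-1\}$.
   Context: Species are denoted by capital letters and their concentrations by the corresponding lower-case letters. A chemical reaction network is a finite directed graph whose vertices (complexes) are nonnegative integer combinations of species (identified with vectors $y\in\mathbb{Z}_{\ge0}^s$) and whose edges $y\to y'$ (reactions) carry rate constants $k_{yy'}>0$; $\mathbf{k}$ denotes the vector of all rate constants. Under mass-action kinetics the concentrations $\mathbf{x}=(x_1,\dots,x_s)$ satisfy $\dot{\mathbf{x}}=\sum_{y\to y'}k_{yy'}\mathbf{x}^y(y'-y)$, with $\mathbf{x}^y=\prod_i x_i^{y_i}$. For a polynomial $\varphi(\mathbf{x})$, its total derivative is $\dot\varphi=\sum_i \frac{\partial\varphi}{\partial x_i}\dot x_i$, with $\dot x_i$ replaced by the right-hand side of the system; $\varphi^{(\ell)}$ is the $\ell$-th iterate ($\varphi^{(1)}=\dot\varphi$). Each $\varphi^{(\ell)}$ is a polynomial in the concentration variables with coefficients that are polynomials in $\mathbf{k}$. Identifiability: a map $\psi$ defined on $\mathbb{R}_{>0}^{\#\text{reactions}}$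 (e.g. a list of rate constants) is identifiable from variables $x_{i_1},\dots,x_{i_t}$ using derivatives of orders $1\le\ell\le D$ if for all $\mathbf{k}^*,\mathbf{k}^{**}\in\mathbb{R}_{>0}^{\#\text{reactions}}$, the equalities $x_{i_j}^{(\ell)}(\mathbf{x},\mathbf{k}^* )=x_{i_j}^{(\ell)}(\mathbf{x},\mathbf{k}^{**})$ as polynomials in $\mathbf{x}$ for all $1\le\ell\le D$, $1\le j\le t$ imply $\psi(\mathbf{k}^* )=\psi(\mathbf{k}^{**})$. Hypotheses. (H1) Every connected component of the network has the form $Y+S_0\rightleftarrows U_1\to Y+S_1\rightleftarrows\cdots\rightleftarrows U_L\to Y+S_L$, meaning the reactions $Y+S_{j-1}\to U_j$ (rate $a_j$), $U_j\to Y+S_{j-1}$ (rate $b_j$), $U_j\to Y+S_j$ (rate $c_j$), $1\le j\le L$; $Y$ is the unique enzyme of the component, the $U_j$ are intermediate species; intermediate species are all distinct throughout the whole network (each participates only in its three reactions); the non-intermediate species $S_0,\dots,S_L$ of a component are pairwise distinct but may appear (in any role, including as enzymes) in other components; each complex lies in a unique connected component. For an intermediate $U$, $\mathscr{S}_U$ denotes the set of substrates/products ($S_0,\dots,S_L$) of the component containing $U$. (H2) The set of species admits a partition $\mathscr{S}^{(0)}\sqcup\mathscr{S}^{(1)}\sqcup\cdots\sqcup\mathscr{S}^{(M)}$, $M\ge2$, into nonempty sets, where $\mathscr{S}^{(0)}$ is the set of intermediate species, such that for each intermediate $U$ whose component has enzyme $Y$ there is $\alpha\ge1$ with $\mathscr{S}_U\subseteq\mathscr{S}^{(\alpha)}$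 and $Y\notin\mathscr{S}^{(\alpha)}$. *)

From Stdlib Require Import Reals List ZArith Arith.
Import ListNotations.
Open Scope R_scope.

(* A network is a list of components;
   component p has the form
     Y + S_0 <=> U_1 -> Y + S_1 <=> ... <=> U_L -> Y + S_L
   with enzyme [cY], substrates/products [cS 0 .. cS L] and intermediates
   [cU 1 .. cU L].  Rate constants are indexed by (component p, step j, kind):
     (p,j,RA) = a_j : Y+S_{j-1} -> U_j
     (p,j,RB) = b_j : U_j -> Y+S_{j-1}
     (p,j,RC) = c_j : U_j -> Y+S_j                                    *)

Record component := mkComp {
  cL : nat;
  cY : nat;
  cS : nat -> nat;
  cU : nat -> nat }.

Definition network := list component.

Definition dummy_comp : component := mkComp 0 0 (fun _ => 0%nat) (fun _ => 0%nat).
Definition nthcomp (N : network) (p : nat) : component := nth p N dummy_comp.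

Inductive rkind := RA | RB | RC.

Definition rates := nat -> nat -> rkind -> R.

(* a reaction: label (p, j, kind), source complex, target complex
   (complexes are multisets of species, written as lists) *)
Definition reaction := (nat * nat * rkind * list nat * list nat)%type.

Definition comp_reactions (p : nat) (C : component) : list reaction :=
  flat_map (fun j =>
    [ (p, j, RA, [cY C; cS C (j - 1)%nat], [cU C j]);
      (p, j, RB, [cU C j], [cY C; cS C (j - 1)%nat]);
      (p, j, RC, [cU C j], [cY C; cS C j]) ]) (seq 1 (cL C)).

Definition reactions (N : network) : list reaction :=
  flat_map (fun p => comp_reactions p (nthcomp N p)) (seq 0 (length N)).

Inductive pexpr :=
  | EX (i : nat)
  | EK (p j : nat) (t : rkind)
  | ECst (z : Z)
  | EAdd (e1 e2 : pexpr)
  | EMul (e1 e2 : pexpr).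

Fixpoint eval (x : nat -> R) (k : rates) (e : pexpr) : R :=
  match e with
  | EX i => x i
  | EK p j t => k p j t
  | ECst z => IZR z
  | EAdd e1 e2 => eval x k e1 + eval x k e2
  | EMul e1 e2 => eval x k e1 * eval x k e2
  end.

Definition monomial (y : list nat) : pexpr :=
  fold_right (fun i e => EMul (EX i) e) (ECst 1) y.

Definition stoich (i : nat) (src tgt : list nat) : Z :=
  (Z.of_nat (count_occ Nat.eq_dec tgt i) - Z.of_nat (count_occ Nat.eq_dec src i))%Z.

(* mass-action right-hand side:  xdot_i = sum_{y->y'} k_{yy'} x^y (y'_i - y_i) *)
Definition rhs (N : network) (i : nat) : pexpr :=
  fold_right (fun (r : reaction) acc =>
    match r with
    | (p, j, t, src, tgt) =>
        EAdd (EMul (EMul (EK p j t) (monomial src)) (ECst (stoich i src tgt))) acc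
    end) (ECst 0) (reactions N).

(* total derivative (Lie derivative along the mass-action vector field) *)
Fixpoint tderiv (N : network) (e : pexpr) : pexpr :=
  match e with
  | EX i => rhs N i
  | EK _ _ _ => ECst 0
  | ECst _ => ECst 0
  | EAdd e1 e2 => EAdd (tderiv N e1) (tderiv N e2)
  | EMul e1 e2 => EAdd (EMul (tderiv N e1) e2) (EMul e1 (tderiv N e2))
  end.

Definition nth_deriv (N : network) (l i : nat) : pexpr :=
  Nat.iter l (tderiv N) (EX i).

Definition valid_comp (N : network) (p : nat) : Prop := (p < length N)%nat.
Definition valid_step (N : network) (p j : nat) : Prop :=
  (p < length N)%nat /\ (1 <= j <= cL (nthcomp N p))%nat.

Definition is_intermediate (N : network) (sp : nat) : Prop :=
  exists p j, valid_step N p j /\ sp = cU (nthcomp N p) j.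

Definition is_species (N : network) (sp : nat) : Prop :=
  exists p, valid_comp N p /\
    (sp = cY (nthcomp N p) \/
     (exists j, (j <= cL (nthcomp N p))%nat /\ sp = cS (nthcomp N p) j) \/
     (exists j, (1 <= j <= cL (nthcomp N p))%nat /\ sp = cU (nthcomp N p) j)).

Definition H1 (N : network) : Prop :=
  (forall p, valid_comp N p -> (1 <= cL (nthcomp N p))%nat) /\
  (forall p i j, valid_comp N p -> (i <= cL (nthcomp N p))%nat -> (j <= cL (nthcomp N p))%nat ->
     cS (nthcomp N p) i = cS (nthcomp N p) j -> i = j) /\
  (forall p j q j', valid_step N p j -> valid_step N q j' ->
     cU (nthcomp N p) j = cU (nthcomp N q) j' -> p = q /\ j = j') /\
  (* intermediates participate only in their three reactions:
     they are never an enzyme or a substrate/product *)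
  (forall p j q, valid_step N p j -> valid_comp N q ->
     cU (nthcomp N p) j <> cY (nthcomp N q) /\
     forall j', (j' <= cL (nthcomp N q))%nat -> cU (nthcomp N p) j <> cS (nthcomp N q) j') /\
  (* each complex lies in a unique connected component:
     complexes Y_p + S_{p,j} and Y_q + S_{q,j'} differ (as multisets) for p <> q *)
  (forall p q j j', valid_comp N p -> valid_comp N q -> p <> q ->
     (j <= cL (nthcomp N p))%nat -> (j' <= cL (nthcomp N q))%nat ->
     ~ (cY (nthcomp N p) = cY (nthcomp N q) /\ cS (nthcomp N p) j = cS (nthcomp N q) j') /\
     ~ (cY (nthcomp N p) = cS (nthcomp N q) j' /\ cS (nthcomp N p) j = cY (nthcomp N q))).

Definition H2 (N : network) : Prop :=
  exists (M : nat) (part : nat -> nat),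
    (2 <= M)%nat /\
    (* part is a partition of the species into classes 0..M, class 0 = intermediates *)
    (forall sp, is_species N sp -> (part sp <= M)%nat /\ (part sp = 0%nat <-> is_intermediate N sp)) /\
    (forall alpha, (alpha <= M)%nat -> exists sp, is_species N sp /\ part sp = alpha) /\
    (forall p, valid_comp N p ->
       exists alpha, (1 <= alpha)%nat /\
         (forall j, (j <= cL (nthcomp N p))%nat -> part (cS (nthcomp N p) j) = alpha) /\
         part (cY (nthcomp N p)) <> alpha).

Definition positive_rates (N : network) (k : rates) : Prop :=
  forall p j t, valid_step N p j -> 0 < k p j t.

Definition identifiable_from {A : Type} (N : network) (psi : rates -> A)
    (vars : list nat) (D : nat) : Prop :=
  forall k1 k2 : rates, positive_rates N k1 -> positive_rates N k2 ->
    (forall l i, (1 <= l <= D)%nat -> In i vars ->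
       forall x : nat -> R, eval x k1 (nth_deriv N l i) = eval x k2 (nth_deriv N l i)) ->
    psi k1 = psi k2.

Definition comp_constants (N : network) (p : nat) (k : rates) : list R :=
  flat_map (fun j => [k p j RA; k p j RB; k p j RC]) (seq 1 (cL (nthcomp N p))).

(* Fix a component  Y + S_0 <=> U_1 -> Y + S_1 <=> ... <=> U_L -> Y + S_L.
   We only evaluate the derivatives s_L^(l) at concentration vectors x supported
   on the species of this component.  By (H1) and (H2) (isolated_chain_of_H1_H2)
   only the reactions of the component fire at such x, and the mass-action field
   keeps x supported on the component.

   The basic tool is tderiv_from_restriction: the total derivative of e at x is
   the derivative at h = 0 of e(x + h f(x)), f the vector field, so a closed
   formula for e on a set stable along these lines can simply be differentiated.
   By induction this gives (derivative_formulas), on the set where s_i and u_i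
   vanish for all i > L - m,
       s_L^(2m)   = K_m y^m s_{L-m},
       s_L^(2m+1) = K_m c_{L-m} y^m u_{L-m}     (when moreover s_{L-m} = 0),
   with K_m = prod_{i<m} c_{L-i} a_{L-i}.  Evaluating at 0/1 indicator vectors
   identifies every K_m and c_j, hence a_j for j >= 2; the explicit formulas for
   the second and third derivatives then identify the b_j and a_1. *)

From Stdlib Require Import Reals List Lia Lra Classical.
From Coquelicot Require Import Coquelicot.
Import ListNotations.
Local Open Scope R_scope.

Section TotalDerivative.
Variables (N : network) (k : rates).

Definition field (x : nat -> R) : nat -> R := fun i => eval x k (rhs N i).

Definition shift (x v : nat -> R) (h : R) : nat -> R := fun i => x i + h * v i.

Fixpoint dirv (x v : nat -> R) (e : pexpr) : R :=
  match e with
  | EX i => v i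
  | EK _ _ _ | ECst _ => 0
  | EAdd e1 e2 => dirv x v e1 + dirv x v e2
  | EMul e1 e2 => dirv x v e1 * eval x k e2 + eval x k e1 * dirv x v e2
  end.

Lemma is_derive_dirv x v e :
  is_derive (fun h => eval (shift x v h) k e) 0 (dirv x v e).
Proof.
  assert (shift0 : forall e', eval (shift x v 0) k e' = eval x k e').
  { intro e'; induction e'; simpl; rewrite ?IHe'1, ?IHe'2; unfold shift; auto; ring. }
  induction e; simpl.
  - unfold shift. auto_derive; auto; ring.
  - apply (is_derive_const (k p j t) 0).
  - apply (is_derive_const (IZR z) 0).
  - exact (is_derive_plus _ _ _ _ _ IHe1 IHe2).
  - pose proof (is_derive_mult _ _ _ _ _ IHe1 IHe2 Rmult_comm) as H.
    simpl in H. rewrite !shift0 in H. exact H.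
Qed.

Lemma dirv_field x e : dirv x (field x) e = eval x k (tderiv N e).
Proof. induction e; simpl; rewrite ?IHe1, ?IHe2; auto. Qed.

Lemma tderiv_from_restriction (P : (nat -> R) -> Prop) (Phi : (nat -> R) -> R) e x d :
  (forall z, P z -> eval z k e = Phi z) ->
  (forall h, P (shift x (field x) h)) ->
  is_derive (fun h => Phi (shift x (field x) h)) 0 d ->
  eval x k (tderiv N e) = d.
Proof.
  intros HPhi Hline Hd. rewrite <- dirv_field.
  assert (He : is_derive (fun h => eval (shift x (field x) h) k e) 0 d).
  { apply (is_derive_ext (fun h => Phi (shift x (field x) h))); [|exact Hd].
    intro h. symmetry. apply HPhi, Hline. }
  apply is_derive_unique in He.
  rewrite <- He. symmetry. apply is_derive_unique, is_derive_dirv.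
Qed.

End TotalDerivative.

Lemma is_derive_pow_times_root (K y g w : R) (m : nat) :
  is_derive (fun h => K * (y + h * g) ^ m * (0 + h * w)) 0 (K * y ^ m * w).
Proof. auto_derive; auto. simpl. rewrite !Rmult_0_l, !Rplus_0_r. ring. Qed.

Definition sumR {A} (l : list A) (f : A -> R) : R :=
  fold_right (fun a acc => f a + acc) 0 l.

Lemma sumR_flat_map {A B} (l : list A) (g : A -> list B) f :
  sumR (flat_map g l) f = sumR l (fun a => sumR (g a) f).
Proof.
  induction l as [|a l IH]; simpl; auto. rewrite <- IH.
  induction (g a); simpl; [ring | rewrite IHl0; ring].
Qed.

Lemma sumR_ext_in {A} (l : list A) f g :
  (forall a, In a l -> f a = g a) -> sumR l f = sumR l g.
Proof. induction l; simpl; intros H; auto. rewrite H, IHl; auto. Qed.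

Lemma sumR_plus {A} (l : list A) f g :
  sumR l (fun a => f a + g a) = sumR l f + sumR l g.
Proof. induction l; simpl; [ring | rewrite IHl; ring]. Qed.

Lemma sumR_zero {A} (l : list A) f : (forall a, In a l -> f a = 0) -> sumR l f = 0.
Proof. induction l; simpl; intros H; auto. rewrite H, IHl; auto; ring. Qed.

Lemma sumR_single {A} (l : list A) f i : NoDup l -> In i l ->
  (forall j, In j l -> j <> i -> f j = 0) -> sumR l f = f i.
Proof.
  induction l as [|a l IH]; simpl; intros Hnd Hin H; [contradiction|].
  inversion Hnd; subst. destruct Hin as [<-|Hin].
  - rewrite sumR_zero; [ring|]. intros j Hj. apply H; auto. intros ->; contradiction.
  - rewrite H, IH; auto; [ring|]. intros ->; contradiction.
Qed.

Lemma sumR_delta (l : list nat) f i : NoDup l -> In i l ->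
  sumR l (fun j => if Nat.eqb j i then f j else 0) = f i.
Proof.
  intros Hnd Hin. rewrite (sumR_single _ _ i Hnd Hin), Nat.eqb_refl; auto.
  intros j _ Hj. apply Nat.eqb_neq in Hj. rewrite Hj; auto.
Qed.

Definition ind (a b : nat) : R := if Nat.eq_dec a b then 1 else 0.

Lemma ind_eq a : ind a a = 1.
Proof. unfold ind; destruct (Nat.eq_dec a a); congruence. Qed.

Lemma ind_neq a b : a <> b -> ind a b = 0.
Proof. unfold ind; destruct (Nat.eq_dec a b); congruence. Qed.

Lemma stoich_ind i src tgt :
  IZR (stoich i src tgt) = sumR tgt (fun a => ind a i) - sumR src (fun a => ind a i).
Proof.
  assert (count : forall l, INR (count_occ Nat.eq_dec l i) = sumR l (fun a => ind a i)).
  { induction l as [|a l IH]; simpl; auto. unfold ind at 1.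
    destruct (Nat.eq_dec a i); rewrite ?S_INR, IH; ring. }
  unfold stoich. rewrite minus_IZR, <- !INR_IZR_INZ, !count. reflexivity.
Qed.

Definition reaction_term (x : nat -> R) (k : rates) (i : nat) (r : reaction) : R :=
  match r with
  | (p, j, t, src, tgt) =>
      k p j t * fold_right (fun a acc => x a * acc) 1 src * IZR (stoich i src tgt)
  end.

Lemma eval_rhs N x k i : eval x k (rhs N i) = sumR (reactions N) (reaction_term x k i).
Proof.
  unfold rhs. induction (reactions N) as [|r l IH]; simpl; auto.
  destruct r as [[[[p j] t] src] tgt]. simpl. rewrite IH.
  assert (Hmono : eval x k (monomial src) = fold_right (fun a acc => x a * acc) 1 src).
  { induction src; simpl; rewrite ?IHsrc; auto. }
  rewrite Hmono. reflexivity.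
Qed.

Definition indicator (l : list nat) : nat -> R :=
  fun sp => if existsb (Nat.eqb sp) l then 1 else 0.

Lemma indicator_in l sp : In sp l -> indicator l sp = 1.
Proof.
  intros H. unfold indicator.
  replace (existsb (Nat.eqb sp) l) with true; auto.
  symmetry. apply existsb_exists. exists sp. split; auto. apply Nat.eqb_refl.
Qed.

Lemma indicator_out l sp : (forall a, In a l -> a <> sp) -> indicator l sp = 0.
Proof.
  intros H. unfold indicator. destruct (existsb (Nat.eqb sp) l) eqn:E; auto.
  apply existsb_exists in E. destruct E as [a [Ha Hsa]].
  apply Nat.eqb_eq in Hsa. subst. exfalso. apply (H a Ha); auto.
Qed.

Section Chain.
Variables (N : network) (p : nat).

Local Notation L := (cL (nthcomp N p)).
Local Notation Yc := (cY (nthcomp N p)).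
Local Notation Sc i := (cS (nthcomp N p) i).
Local Notation Uc j := (cU (nthcomp N p) j).

Definition on_chain (sp : nat) : Prop :=
  sp = Yc \/ (exists i, (i <= L)%nat /\ sp = Sc i) \/
  (exists j, (1 <= j <= L)%nat /\ sp = Uc j).

Definition supported (x : nat -> R) : Prop := forall sp, ~ on_chain sp -> x sp = 0.

Record isolated_chain : Prop := {
  comp_valid : (p < length N)%nat;
  chain_nonempty : (1 <= L)%nat;
  S_inj : forall i j, (i <= L)%nat -> (j <= L)%nat -> Sc i = Sc j -> i = j;
  U_inj : forall i j, (1 <= i <= L)%nat -> (1 <= j <= L)%nat -> Uc i = Uc j -> i = j;
  U_neq_Y : forall j, (1 <= j <= L)%nat -> Uc j <> Yc;
  U_neq_S : forall j i, (1 <= j <= L)%nat -> (i <= L)%nat -> Uc j <> Sc i;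
  Y_neq_S : forall i, (i <= L)%nat -> Yc <> Sc i;
  foreign_U : forall q j, (q < length N)%nat -> q <> p ->
    (1 <= j <= cL (nthcomp N q))%nat -> ~ on_chain (cU (nthcomp N q) j);
  foreign_YS : forall q i, (q < length N)%nat -> q <> p -> (i <= cL (nthcomp N q))%nat ->
    ~ (on_chain (cY (nthcomp N q)) /\ on_chain (cS (nthcomp N q) i))
}.

Hypothesis G : isolated_chain.

Ltac species_neq := let E := fresh "E" in intro E; first
  [ refine (U_neq_S G _ _ _ _ E); lia
  | refine (U_neq_S G _ _ _ _ (eq_sym E)); lia
  | refine (U_neq_Y G _ _ E); lia
  | refine (U_neq_Y G _ _ (eq_sym E)); lia
  | refine (Y_neq_S G _ _ E); lia
  | refine (Y_neq_S G _ _ (eq_sym E)); lia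
  | apply (S_inj G) in E; lia
  | apply (U_inj G) in E; lia ].

Ltac on_chain_explicit := unfold on_chain;
  first [ left; reflexivity | right; left; eexists; split; [|reflexivity]; lia
        | right; right; eexists; split; [|reflexivity]; lia ].

Lemma field_supported k x f : supported x ->
  field N k x f = sumR (seq 1 L) (fun j =>
    k p j RA * x Yc * x (Sc (j-1)) * (ind (Uc j) f - ind Yc f - ind (Sc (j-1)) f)
    + k p j RB * x (Uc j) * (ind Yc f + ind (Sc (j-1)) f - ind (Uc j) f)
    + k p j RC * x (Uc j) * (ind Yc f + ind (Sc j) f - ind (Uc j) f)).
Proof.
  intros V. unfold field. rewrite eval_rhs. unfold reactions.
  rewrite sumR_flat_map, (sumR_single _ _ p).
  - unfold comp_reactions. rewrite sumR_flat_map. apply sumR_ext_in. intros j _.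
    simpl. rewrite !stoich_ind. simpl. ring.
  - apply seq_NoDup.
  - apply in_seq. pose proof (comp_valid G). lia.
  - intros q Hq Hqp. apply in_seq in Hq. unfold comp_reactions. rewrite sumR_flat_map.
    apply sumR_zero. intros j Hj. apply in_seq in Hj. simpl.
    rewrite (V (cU (nthcomp N q) j)) by (apply (foreign_U G); lia).
    destruct (classic (on_chain (cY (nthcomp N q)))) as [HY|HY].
    + rewrite (V (cS (nthcomp N q) (j - 1))); [ring|].
      intro HS. apply (foreign_YS G q (j - 1)); auto; lia.
    + rewrite (V _ HY). ring.
Qed.

Lemma field_U k x j : supported x -> (1 <= j <= L)%nat ->
  field N k x (Uc j) = k p j RA * x Yc * x (Sc (j-1)) - (k p j RB + k p j RC) * x (Uc j).
Proof.
  intros V Hj. rewrite field_supported by auto.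
  rewrite (sumR_single _ _ j); [| apply seq_NoDup | apply in_seq; lia |].
  - rewrite ind_eq, !ind_neq; [ring | species_neq ..].
  - intros i Hi Hij. apply in_seq in Hi.
    rewrite !ind_neq; [ring | species_neq ..].
Qed.

Lemma field_Y k x : supported x ->
  field N k x Yc = sumR (seq 1 L) (fun j =>
     - k p j RA * x Yc * x (Sc (j-1)) + (k p j RB + k p j RC) * x (Uc j)).
Proof.
  intros V. rewrite field_supported by auto. apply sumR_ext_in.
  intros j Hj. apply in_seq in Hj.
  rewrite ind_eq, !ind_neq; [ring | species_neq ..].
Qed.

Lemma field_off k x f : supported x -> ~ on_chain f -> field N k x f = 0.
Proof.
  intros V Hf. rewrite field_supported by auto. apply sumR_zero.
  intros j Hj. apply in_seq in Hj.
  rewrite !ind_neq; [ring | ..]; intro E; subst f; apply Hf; on_chain_explicit.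
Qed.

(* S_i is consumed by step i+1 and produced by step i. *)
Lemma field_S k x i : supported x -> (i <= L)%nat ->
  field N k x (Sc i) =
    sumR (seq 1 L) (fun j => if Nat.eqb j (S i)
      then - k p j RA * x Yc * x (Sc i) + k p j RB * x (Uc j) else 0)
  + sumR (seq 1 L) (fun j => if Nat.eqb j i then k p j RC * x (Uc j) else 0).
Proof.
  intros V Hi. rewrite field_supported, <- sumR_plus by auto.
  assert (indS : forall a, (a <= L)%nat -> ind (Sc a) (Sc i) = if Nat.eqb a i then 1 else 0).
  { intros a Ha. destruct (Nat.eqb_spec a i) as [->|Hai]; [apply ind_eq|].
    apply ind_neq. intro E. apply Hai, (S_inj G); auto. }
  apply sumR_ext_in. intros j Hj. apply in_seq in Hj.
  rewrite (indS (j - 1)%nat), (indS j), !ind_neq by (lia || species_neq).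
  destruct (Nat.eqb_spec j (S i)); destruct (Nat.eqb_spec (j - 1) i);
    destruct (Nat.eqb_spec j i); try lia;
    try (subst; replace (S i - 1)%nat with i by lia); ring.
Qed.

Lemma field_S_mid k x i : supported x -> (1 <= i < L)%nat ->
  field N k x (Sc i) = - k p (S i) RA * x Yc * x (Sc i) + k p (S i) RB * x (Uc (S i))
     + k p i RC * x (Uc i).
Proof.
  intros V Hi. rewrite field_S by (auto; lia).
  rewrite (sumR_delta _ (fun j => - k p j RA * x Yc * x (Sc i) + k p j RB * x (Uc j))),
    (sumR_delta _ (fun j => k p j RC * x (Uc j))); try apply seq_NoDup; try (apply in_seq; lia).
  reflexivity.
Qed.

Lemma field_S_last k x : supported x -> field N k x (Sc L) = k p L RC * x (Uc L).
Proof.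
  intros V. pose proof (chain_nonempty G). rewrite field_S by (auto; lia).
  rewrite (sumR_delta _ (fun j => k p j RC * x (Uc j))); try apply seq_NoDup; try (apply in_seq; lia).
  rewrite sumR_zero; [ring|]. intros j Hj. apply in_seq in Hj.
  destruct (Nat.eqb_spec j (S L)); [lia | reflexivity].
Qed.

Lemma supported_shift k x h : supported x -> supported (shift x (field N k x) h).
Proof. intros V sp Hsp. unfold shift. rewrite V, field_off by auto. ring. Qed.

Section Derivatives.
Variable k : rates.

Local Notation field := (field N k).

Definition obs (l : nat) (x : nat -> R) : R := eval x k (nth_deriv N l (Sc L)).

Fixpoint chain_coef (m : nat) : R :=
  match m with
  | O => 1
  | S m => chain_coef m * k p (L - m)%nat RC * k p (L - m)%nat RA
  end.

Definition tail_vanishes (m : nat) (x : nat -> R) : Prop :=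
  forall i, (L - m < i <= L)%nat -> x (Sc i) = 0 /\ x (Uc i) = 0.

Lemma field_S_zero x i : supported x -> (1 <= i <= L)%nat ->
  x (Sc i) = 0 -> x (Uc i) = 0 -> ((i < L)%nat -> x (Uc (S i)) = 0) ->
  field x (Sc i) = 0.
Proof.
  intros V Hi Hs Hu Hu'. destruct (Nat.eq_dec i L) as [->|].
  - rewrite field_S_last, Hu by auto. ring.
  - rewrite field_S_mid, Hs, Hu, Hu' by (auto; lia). ring.
Qed.

Lemma tail_vanishes_shift m x h : supported x -> (m <= L - 1)%nat ->
  tail_vanishes m x -> x (Sc (L - m)) = 0 -> tail_vanishes m (shift x (field x) h).
Proof.
  intros V Hm Z Hs i Hi. pose proof (chain_nonempty G). unfold shift.
  destruct (Z i Hi) as [Zs Zu]. rewrite Zs, Zu. split.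
  - rewrite field_S_zero by (auto; try lia; intros; apply (Z (S i)); lia). ring.
  - rewrite field_U, Zu by (auto; lia).
    assert (x (Sc (i - 1)) = 0) as ->.
    { destruct (Nat.eq_dec (i - 1) (L - m)) as [->|]; [auto | apply (Z (i - 1)%nat); lia]. }
    ring.
Qed.

Definition even_formula (m : nat) : Prop :=
  forall x, supported x -> tail_vanishes m x ->
  obs (2 * m) x = chain_coef m * x Yc ^ m * x (Sc (L - m)).

Definition odd_formula (m : nat) : Prop :=
  forall x, supported x -> tail_vanishes m x -> x (Sc (L - m)) = 0 ->
  obs (S (2 * m)) x = chain_coef m * k p (L - m)%nat RC * x Yc ^ m * x (Uc (L - m)).

(* Differentiating K_m y^m s_{L-m} where s_{L-m} = 0 leaves K_m y^m s_{L-m}',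
   and s_{L-m}' = c_{L-m} u_{L-m} there. *)
Lemma even_to_odd m : (m <= L - 1)%nat -> even_formula m -> odd_formula m.
Proof.
  intros Hm HE x V Z Hs. pose proof (chain_nonempty G).
  apply (tderiv_from_restriction N k
     (fun z => supported z /\ tail_vanishes m z)
     (fun z => chain_coef m * z Yc ^ m * z (Sc (L - m)))).
  - intros z [Vz Zz]. apply HE; auto.
  - intro h. split; [apply supported_shift | apply tail_vanishes_shift]; auto.
  - assert (HG : field x (Sc (L - m)) = k p (L - m)%nat RC * x (Uc (L - m))).
    { destruct (Nat.eq_dec m 0) as [->|].
      - rewrite Nat.sub_0_r. apply field_S_last; auto.
      - rewrite field_S_mid, Hs by (auto; lia).
        rewrite (proj2 (Z (S (L - m)) ltac:(lia))). ring. }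
    replace (chain_coef m * k p (L - m)%nat RC * x Yc ^ m * x (Uc (L - m)))
      with (chain_coef m * x Yc ^ m * field x (Sc (L - m))) by (rewrite HG; ring).
    eapply is_derive_ext; [|apply is_derive_pow_times_root].
    intro t. simpl. unfold shift. rewrite Hs. reflexivity.
Qed.

(* Likewise, where u_{L-m} = 0 we have u_{L-m}' = a_{L-m} y s_{L-m-1}. *)
Lemma odd_to_even m : (S m <= L - 1)%nat -> odd_formula m -> even_formula (S m).
Proof.
  intros Hm HO x V Z. pose proof (chain_nonempty G).
  replace (2 * S m)%nat with (S (S (2 * m))) by lia.
  assert (Hs : x (Sc (L - m)) = 0) by (apply (Z (L - m)%nat); lia).
  assert (Hu : x (Uc (L - m)) = 0) by (apply (Z (L - m)%nat); lia).
  apply (tderiv_from_restriction N k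
     (fun z => supported z /\ tail_vanishes m z /\ z (Sc (L - m)) = 0)
     (fun z => chain_coef m * k p (L - m)%nat RC * z Yc ^ m * z (Uc (L - m)))).
  - intros z [Vz [Zz Sz]]. apply HO; auto.
  - intro h. split; [|split].
    + apply supported_shift; auto.
    + apply tail_vanishes_shift; auto; [lia|]. intros i Hi. apply Z. lia.
    + unfold shift. rewrite Hs, field_S_zero by (auto; try lia; intros; apply (Z (S (L - m))); lia).
      ring.
  - replace (chain_coef (S m) * x Yc ^ S m * x (Sc (L - S m)))
      with (chain_coef m * k p (L - m)%nat RC * x Yc ^ m * field x (Uc (L - m))).
    + eapply is_derive_ext; [|apply is_derive_pow_times_root].
      intro t. simpl. unfold shift. rewrite Hu. reflexivity.
    + rewrite field_U, Hu by (auto; lia).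
      replace (L - S m)%nat with (L - m - 1)%nat by lia. simpl. ring.
Qed.

Lemma derivative_formulas m : (m <= L - 1)%nat -> even_formula m /\ odd_formula m.
Proof.
  induction m as [|m IH]; intros Hm.
  - assert (E0 : even_formula 0).
    { intros x V Z. unfold obs. simpl. rewrite Nat.sub_0_r. ring. }
    split; auto. apply even_to_odd; auto.
  - assert (ES : even_formula (S m)) by (apply odd_to_even; [|apply IH]; lia).
    split; auto. apply even_to_odd; auto.
Qed.

Lemma obs1 x : supported x -> obs 1 x = k p L RC * x (Uc L).
Proof. intros V. apply field_S_last; auto. Qed.

Lemma obs2 x : supported x ->
  obs 2 x = k p L RC * (k p L RA * x Yc * x (Sc (L - 1))
     - (k p L RB + k p L RC) * x (Uc L)).
Proof.
  intros V. pose proof (chain_nonempty G).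
  rewrite <- field_U by (auto; lia).
  apply (tderiv_from_restriction N k supported (fun z => k p L RC * z (Uc L))).
  - apply obs1.
  - intro h. apply supported_shift; auto.
  - unfold shift. auto_derive; auto. ring.
Qed.

Lemma obs3 x : supported x ->
  obs 3 x = k p L RC * (k p L RA * (field x Yc * x (Sc (L - 1))
       + x Yc * field x (Sc (L - 1)))
     - (k p L RB + k p L RC) * field x (Uc L)).
Proof.
  intros V.
  apply (tderiv_from_restriction N k supported (fun z => k p L RC *
     (k p L RA * z Yc * z (Sc (L - 1)) - (k p L RB + k p L RC) * z (Uc L)))).
  - apply obs2.
  - intro h. apply supported_shift; auto.
  - unfold shift. auto_derive; auto. ring.
Qed.

Lemma chain_coef_pos m : (forall j t, (1 <= j <= L)%nat -> 0 < k p j t) ->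
  (m <= L)%nat -> 0 < chain_coef m.
Proof.
  intros P. induction m as [|m IH]; simpl; intros Hm; [lra|].
  pose proof (P (L - m)%nat RC ltac:(lia)). pose proof (P (L - m)%nat RA ltac:(lia)).
  pose proof (IH ltac:(lia)). apply Rmult_lt_0_compat; [apply Rmult_lt_0_compat|]; auto.
Qed.

End Derivatives.

Lemma supported_indicator l : (forall a, In a l -> on_chain a) -> supported (indicator l).
Proof. intros H sp Hsp. apply indicator_out. intros a Ha ->. apply Hsp, H; auto. Qed.

Ltac on_chain_list := apply supported_indicator; simpl;
  let a := fresh "a" in let Ha := fresh "Ha" in intros a Ha;
  repeat destruct Ha as [<-|Ha]; try contradiction; on_chain_explicit.
Ltac listed := simpl; tauto.
Ltac not_listed := simpl;
  let a := fresh "a" in let Ha := fresh "Ha" in intros a Ha;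
  repeat destruct Ha as [<-|Ha]; try contradiction; species_neq.

Lemma field_Y_at_U_S k j : (1 <= j < L)%nat ->
  field N k (indicator [Uc j; Sc (L - 1)]) Yc = k p j RB + k p j RC.
Proof.
  intros Hj. rewrite field_Y by on_chain_list.
  rewrite (indicator_out _ Yc) by not_listed.
  rewrite <- (sumR_delta (seq 1 L) (fun i => k p i RB + k p i RC) j);
    try apply seq_NoDup; try (apply in_seq; lia).
  apply sumR_ext_in. intros i Hi. apply in_seq in Hi.
  destruct (Nat.eqb_spec i j) as [->|].
  - rewrite (indicator_in _ (Uc j)) by listed. ring.
  - rewrite (indicator_out _ (Uc i)) by not_listed. ring.
Qed.

Lemma field_Y_at_Y_S0_S k : (2 <= L)%nat ->
  field N k (indicator [Yc; Sc 0; Sc (L - 1)]) Yc = - k p 1%nat RA + - k p L RA.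
Proof.
  intros HL. rewrite field_Y by on_chain_list.
  rewrite (indicator_in _ Yc) by listed.
  rewrite <- (sumR_delta (seq 1 L) (fun i => - k p i RA) 1%nat),
    <- (sumR_delta (seq 1 L) (fun i => - k p i RA) L), <- sumR_plus;
    try apply seq_NoDup; try (apply in_seq; lia).
  apply sumR_ext_in. intros i Hi. apply in_seq in Hi.
  rewrite (indicator_out _ (Uc i)) by not_listed.
  destruct (Nat.eqb_spec i 1); destruct (Nat.eqb_spec i L); try lia; subst.
  - rewrite (indicator_in _ (Sc (1 - 1))) by listed. ring.
  - rewrite (indicator_in _ (Sc (L - 1))) by listed. ring.
  - rewrite (indicator_out _ (Sc (i - 1))) by not_listed. ring.
Qed.

Section Identification.
Variables k1 k2 : rates.
Hypothesis pos2 : forall j t, (1 <= j <= L)%nat -> 0 < k2 p j t.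
Hypothesis same_obs : forall l x, (1 <= l <= Nat.max 2 (2 * L - 1))%nat ->
  obs k1 l x = obs k2 l x.

(* Even derivatives of order 2m <= 2L - 2, at y = s_{L-m} = 1, give K_m. *)
Lemma chain_coef_agree m : (m <= L - 1)%nat -> chain_coef k1 m = chain_coef k2 m.
Proof.
  intros Hm. destruct m as [|m]; [reflexivity|].
  set (x := indicator [Yc; Sc (L - S m)]).
  assert (Vx : supported x) by on_chain_list.
  assert (Zx : tail_vanishes (S m) x) by (intros i Hi; split; apply indicator_out; not_listed).
  pose proof (proj1 (derivative_formulas k1 _ Hm) x Vx Zx) as E1.
  pose proof (proj1 (derivative_formulas k2 _ Hm) x Vx Zx) as E2.
  rewrite same_obs, E2 in E1 by lia. unfold x in E1.
  rewrite (indicator_in _ Yc), (indicator_in _ (Sc _)), pow1 in E1 by listed. lra.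
Qed.

(* Odd derivatives of order 2m + 1 <= 2L - 1, at y = u_{L-m} = 1, give K_m c_{L-m}. *)
Lemma c_agree j : (1 <= j <= L)%nat -> k1 p j RC = k2 p j RC.
Proof.
  intros Hj. set (m := (L - j)%nat).
  replace j with (L - m)%nat by (unfold m; lia).
  assert (Hm : (m <= L - 1)%nat) by (unfold m; lia).
  set (x := indicator [Yc; Uc (L - m)]).
  assert (Vx : supported x) by on_chain_list.
  assert (Zx : tail_vanishes m x) by (intros i Hi; split; apply indicator_out; not_listed).
  assert (Sx : x (Sc (L - m)) = 0) by (apply indicator_out; not_listed).
  pose proof (proj2 (derivative_formulas k1 _ Hm) x Vx Zx Sx) as E1.
  pose proof (proj2 (derivative_formulas k2 _ Hm) x Vx Zx Sx) as E2.
  rewrite same_obs, E2, chain_coef_agree in E1 by lia. unfold x in E1.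
  rewrite (indicator_in _ Yc), (indicator_in _ (Uc _)), pow1 in E1 by listed.
  pose proof (chain_coef_pos k2 m pos2 ltac:(lia)).
  apply (Rmult_eq_reg_l (chain_coef k2 m)); lra.
Qed.

(* a_j = K_{m+1} / (K_m c_j) with m = L - j, for j >= 2. *)
Lemma a_agree j : (2 <= j <= L)%nat -> k1 p j RA = k2 p j RA.
Proof.
  intros Hj. set (m := (L - j)%nat).
  replace j with (L - m)%nat by (unfold m; lia).
  pose proof (chain_coef_agree (S m) ltac:(unfold m; lia)) as E. simpl in E.
  rewrite chain_coef_agree, c_agree in E by (unfold m; lia).
  pose proof (chain_coef_pos k2 m pos2 ltac:(lia)).
  pose proof (pos2 (L - m)%nat RC ltac:(unfold m; lia)).
  apply (Rmult_eq_reg_l (chain_coef k2 m * k2 p (L - m)%nat RC)); [lra|].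
  apply Rgt_not_eq, Rmult_lt_0_compat; auto.
Qed.

(* s_L'' at u_L = 1 is -c_L (b_L + c_L). *)
Lemma b_last_agree : k1 p L RB = k2 p L RB.
Proof.
  pose proof (chain_nonempty G).
  set (x := indicator [Uc L]).
  assert (Vx : supported x) by on_chain_list.
  pose proof (same_obs 2 x ltac:(lia)) as E.
  rewrite (obs2 k1 x Vx), (obs2 k2 x Vx), (c_agree L) in E by lia. unfold x in E.
  rewrite (indicator_in _ (Uc L)), (indicator_out _ Yc) in E by (listed || not_listed).
  pose proof (pos2 L RC ltac:(lia)).
  apply (Rmult_eq_reg_l (k2 p L RC)); nra.
Qed.

(* For L = 1, s_L'' at y = s_0 = 1 is c_1 a_1. *)
Lemma a1_agree_single : L = 1%nat -> k1 p 1%nat RA = k2 p 1%nat RA.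
Proof.
  intros HL1. set (x := indicator [Yc; Sc (L - 1)]).
  assert (Vx : supported x) by on_chain_list.
  pose proof (same_obs 2 x ltac:(lia)) as E.
  rewrite (obs2 k1 x Vx), (obs2 k2 x Vx), (c_agree L) in E by lia. unfold x in E.
  rewrite (indicator_in _ Yc), (indicator_in _ (Sc _)), (indicator_out _ (Uc L)) in E
    by (listed || not_listed).
  pose proof (pos2 L RC ltac:(lia)). rewrite HL1 in *.
  apply (Rmult_eq_reg_l (k2 p 1%nat RC)); nra.
Qed.

(* For L >= 2 and j < L, s_L''' at u_j = s_{L-1} = 1 is c_L a_L (b_j + c_j). *)
Lemma b_agree j : (2 <= L)%nat -> (1 <= j < L)%nat -> k1 p j RB = k2 p j RB.
Proof.
  intros HL Hj. set (x := indicator [Uc j; Sc (L - 1)]).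
  assert (Vx : supported x) by on_chain_list.
  pose proof (same_obs 3 x ltac:(lia)) as E.
  rewrite (obs3 k1 x Vx), (obs3 k2 x Vx), !(field_U _ x _ Vx) in E by lia.
  unfold x in E. rewrite !field_Y_at_U_S in E by lia.
  rewrite (indicator_in _ (Sc _)), (indicator_out _ Yc), (indicator_out _ (Uc L)) in E
    by (listed || not_listed).
  rewrite b_last_agree, !(c_agree L), (c_agree j), (a_agree L) in E by lia.
  pose proof (pos2 L RC ltac:(lia)). pose proof (pos2 L RA ltac:(lia)).
  assert (0 < k2 p L RC * k2 p L RA) by (apply Rmult_lt_0_compat; auto).
  apply (Rmult_eq_reg_l (k2 p L RC * k2 p L RA)); nra.
Qed.

(* For L >= 2, s_L''' at y = s_0 = s_{L-1} = 1 is affine in a_1 with slope -c_L a_L. *)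
Lemma a1_agree_chain : (2 <= L)%nat -> k1 p 1%nat RA = k2 p 1%nat RA.
Proof.
  intros HL. set (x := indicator [Yc; Sc 0; Sc (L - 1)]).
  assert (Vx : supported x) by on_chain_list.
  pose proof (same_obs 3 x ltac:(lia)) as E.
  rewrite (obs3 k1 x Vx), (obs3 k2 x Vx), !(field_U _ x _ Vx), !(field_S_mid _ x _ Vx) in E by lia.
  unfold x in E. rewrite !field_Y_at_Y_S0_S in E by lia.
  replace (S (L - 1)) with L in E by lia.
  rewrite (indicator_in _ (Sc (L - 1))), (indicator_in _ Yc), (indicator_out _ (Uc L)),
    (indicator_out _ (Uc (L - 1))) in E by (listed || not_listed).
  rewrite b_last_agree, !(c_agree L), (a_agree L) in E by lia.
  pose proof (pos2 L RC ltac:(lia)). pose proof (pos2 L RA ltac:(lia)).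
  assert (0 < k2 p L RC * k2 p L RA) by (apply Rmult_lt_0_compat; auto).
  apply (Rmult_eq_reg_l (k2 p L RC * k2 p L RA)); nra.
Qed.

Lemma rates_agree j t : (1 <= j <= L)%nat -> k1 p j t = k2 p j t.
Proof.
  intros Hj. destruct t.
  - destruct (Nat.eq_dec j 1) as [->|]; [|apply a_agree; lia].
    destruct (Nat.eq_dec L 1); [apply a1_agree_single | apply a1_agree_chain]; auto; lia.
  - destruct (Nat.eq_dec j L) as [->|]; [apply b_last_agree | apply b_agree; lia].
  - apply c_agree; auto.
Qed.

End Identification.
End Chain.

(* (H1) and (H2) make every component an isolated chain.  (H2) separates
   enzymes from substrates: an enzyme never lies in the class of its own
   substrates, so neither Y_p = S_{p,i} nor (Y_q, S_{q,i}) = (S_{p,a}, S_{p,b}). *)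
Lemma isolated_chain_of_H1_H2 N p : H1 N -> H2 N -> (p < length N)%nat -> isolated_chain N p.
Proof.
  intros [h_L [h_Sinj [h_Uinj [h_U h_cplx]]]] [_ [part [_ [_ [_ h_class]]]]] Hp.
  destruct (h_class p Hp) as [ap [_ [HapS HapY]]].
  constructor; auto.
  - intros i j Hi Hj E. apply (h_Sinj p); auto.
  - intros i j Hi Hj E. refine (proj2 (h_Uinj p i p j _ _ E)); split; auto.
  - intros j Hj. apply (h_U p j p); [split|]; auto.
  - intros j i Hj Hi. apply (h_U p j p); [split| |]; auto.
  - intros i Hi E. apply HapY. rewrite E. apply HapS; auto.
  - intros q j Hq Hqp Hj [E|[[i [Hi E]]|[j' [Hj' E]]]].
    + apply (h_U q j p); [split| |]; auto.
    + apply (h_U q j p) with i; [split| | |]; auto.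
    + destruct (h_Uinj q j p j') as [E1 _]; [split|split| |]; auto.
  - intros q i Hq Hqp Hi [HY HS].
    destruct (h_class q Hq) as [aq [_ [HaqS HaqY]]].
    assert (HU : forall j, (1 <= j <= cL (nthcomp N p))%nat -> cU (nthcomp N p) j <> cY (nthcomp N q)
                /\ cU (nthcomp N p) j <> cS (nthcomp N q) i).
    { intros j Hj. destruct (h_U p j q (conj Hp Hj) Hq) as [HUY HUS]. auto. }
    destruct HY as [Ey|[[a [Ha Ey]]|[j [Hj Ey]]]];
      destruct HS as [Es|[[b [Hb Es]]|[j' [Hj' Es]]]];
      try (destruct (HU j Hj); congruence); try (destruct (HU j' Hj'); congruence).
    + apply HaqY. rewrite Ey, <- Es. apply HaqS; auto.
    + apply (proj1 (h_cplx p q b i Hp Hq (not_eq_sym Hqp) Hb Hi)); auto.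
    + apply (proj2 (h_cplx p q a i Hp Hq (not_eq_sym Hqp) Ha Hi)); auto.
    + apply HaqY. rewrite Ey, HapS, <- (HapS b Hb), <- Es by auto. apply HaqS; auto.
Qed.

Theorem mainTheorem1 (net : network) (p : nat) :
  H1 net -> H2 net -> (p < length net)%nat ->
  identifiable_from net (comp_constants net p)
    [cS (nthcomp net p) (cL (nthcomp net p))]
    (Nat.max 2 (2 * cL (nthcomp net p) - 1)).
Proof.
  intros h1 h2 Hp k1 k2 _ pos2 same_derivs.
  pose proof (isolated_chain_of_H1_H2 net p h1 h2 Hp) as G.
  assert (agree : forall j t, In j (seq 1 (cL (nthcomp net p))) -> k1 p j t = k2 p j t).
  { intros j t Hj. apply in_seq in Hj.
    apply (rates_agree net p G); [| |lia].
    - intros j' t' Hj'. apply pos2. split; auto.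
    - intros l x Hl. apply same_derivs; simpl; auto. }
  unfold comp_constants. rewrite !flat_map_concat_map. f_equal.
  apply map_ext_in. intros j Hj. rewrite !agree by auto. reflexivity.
Qed.
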